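(* Let $\mathcal R$ be a DCTRS and $\langle t,\pi'\rangle$ a safe pair such that $\langle t,\pi'\rangle\leftharpoondown_{\mathcal R}^{*}\langle s,\pi\rangle$ for some term $s$ and trace $\pi$. Then the derivation $\langle t,\pi'\rangle\leftharpoondown_{\mathcal R}^{*}\langle s,\pi\rangle$ is deterministic.
   Context: Terms $\mathcal T(\mathcal F,\mathcal V)$; $\mathrm{Pos}(t)$ positions ($\epsilon$ root), $t|_p$ subterm, $t[u]_p$ replacement, $\mathrm{Var}(t_1,\dots,t_n)$ the variables occurring in the $t_i$, $\mathrm{Dom}(\sigma)=\{x\mid x\sigma\ne x\}$. A DCTRS $\mathcal R$ is a finite set of labelled conditional rules $\beta: l\to r\Leftarrow s_1\twoheadrightarrow t_1,\dots,s_n\twoheadrightarrow t_n$ ($l\notin\mathcal V$) with $\mathrm{Var}(r)\subseteq\mathrm{Var}(l,s_1,\dots,s_n,t_1,\dots,t_n)$ and $\mathrm{Var}(s_i)\subseteq\mathrm{Var}(l,t_1,\dots,t_{i-1})$ for all $i$; labels are unique and rule variables are never renamed. For such a rule let $V_\beta=(\mathrm{Var}(l)\setminus\mathrm{Var}(r,s_1,\dots,s_n,t_1,\dots,t_n))\cup\bigcup_{i=1}^n(\mathrm{Var}(t_i)\setminus\mathrm{Var}(r,s_{i+1},\dots,s_n))$. Traces: $[\,]$ is a trace, and if $\pi,\pi_1,\dots,\pi_n$ are traces, $\beta$ labels a rule with $n$ conditions, $p$ is a position and $\sigma$ a ground substitution, then $\beta(p,\sigma,\pi_1,\dots,\pi_n):\pi$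 is a trace. A trace $\pi$ is safe iff for every trace term $\beta(p,\sigma,\pi_1,\dots,\pi_n)$ in $\pi$, $\sigma$ is ground with $\mathrm{Dom}(\sigma)=V_\beta$ and $\pi_1,\dots,\pi_n$ are safe; $\langle s,\pi\rangle$ ($s$ ground) is safe iff $\pi$ is. Backward reversible rewriting (least relation on safe pairs): $\langle t,\beta(p,\sigma',\pi_1,\dots,\pi_n):\pi\rangle\leftharpoondown_{\mathcal R}\langle s,\pi\rangle$ iff this pair is safe, $\beta: l\to r\Leftarrow s_1\twoheadrightarrow t_1,\dots,s_n\twoheadrightarrow t_n\in\mathcal R$, and there is a ground $\theta$ with $\mathrm{Dom}(\theta)=\mathrm{Var}(r,s_1,\dots,s_n)\setminus\mathrm{Dom}(\sigma')$, $t|_p=r\theta$, $\langle t_i\theta\sigma',\pi_i\rangle\leftharpoondown_{\mathcal R}^{*}\langle s_i\theta\sigma',[\,]\rangle$ for all $i$, and $s=t[l\theta\sigma']_p$. A step $\langle t,\pi'\rangle\leftharpoondown_{\mathcal R}\langle s,\pi\rangle$ is deterministic if there is no pair $\langle s'',\pi''\rangle\neq\langle s,\pi\rangle$ with $\langle t,\pi'\rangle\leftharpoondown_{\mathcal R}\langle s'',\pi''\rangle$ and, moreover, the subderivations for the conditions of the applied rule are deterministic; a derivation is deterministic if each of its steps is. *)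

From Stdlib Require Import List.
Import ListNotations.
Set Implicit Arguments.

Inductive term : Type :=
| Var : nat -> term
| Fun : nat -> list term -> term.

Fixpoint vars (t : term) : list nat :=
  match t with
  | Var x => [x]
  | Fun _ args => flat_map vars args
  end.

Definition ground (t : term) : Prop := vars t = [].

Definition subst_t := nat -> term.

Fixpoint subst (sigma : subst_t) (t : term) : term :=
  match t with
  | Var x => sigma x
  | Fun f args => Fun f (map (subst sigma) args)
  end.

Definition in_dom (sigma : subst_t) (x : nat) : Prop := sigma x <> Var x.

Definition ground_subst (sigma : subst_t) : Prop :=
  forall x, in_dom sigma x -> ground (sigma x).

(** Positions: lists of (0-based) argument indices; [] is the root. *)
Definition pos := list nat.

Fixpoint subterm_at (t : term) (p : pos) : option term :=
  match p with
  | [] => Some t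
  | i :: p' =>
      match t with
      | Var _ => None
      | Fun _ args =>
          match nth_error args i with
          | Some u => subterm_at u p'
          | None => None
          end
      end
  end.

Fixpoint set_nth (l : list term) (i : nat) (u : term) : list term :=
  match l, i with
  | [], _ => []
  | _ :: l', 0 => u :: l'
  | a :: l', S i' => a :: set_nth l' i' u
  end.

Fixpoint replace_at (t : term) (p : pos) (u : term) : option term :=
  match p with
  | [] => Some u
  | i :: p' =>
      match t with
      | Var _ => None
      | Fun f args =>
          match nth_error args i with
          | Some ti =>
              match replace_at ti p' u with
              | Some ti' => Some (Fun f (set_nth args i ti'))
              | None => None
              end
          | None => None
          end
      end
  end.

(** Labelled conditional rules  beta : l -> r <= s_1 ->> t_1, ..., s_n ->> t_n
    (conditions stored as pairs (s_i, t_i), 0-based). *)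
Record rule : Type := mkRule {
  label : nat;
  lhs : term;
  rhs : term;
  conds : list (term * term)
}.

Definition cs (rl : rule) (i : nat) : term := fst (nth i (conds rl) (Var 0, Var 0)).
Definition ct (rl : rule) (i : nat) : term := snd (nth i (conds rl) (Var 0, Var 0)).
Definition ncond (rl : rule) : nat := length (conds rl).

Definition dctrs_rule (rl : rule) : Prop :=
  (forall x, lhs rl <> Var x) /\
  (forall x, In x (vars (rhs rl)) ->
     In x (vars (lhs rl)) \/
     exists i, i < ncond rl /\ (In x (vars (cs rl i)) \/ In x (vars (ct rl i)))) /\
  (forall i, i < ncond rl -> forall x, In x (vars (cs rl i)) ->
     In x (vars (lhs rl)) \/ exists j, j < i /\ In x (vars (ct rl j))).

Definition DCTRS (R : list rule) : Prop :=
  NoDup (map label R) /\ Forall dctrs_rule R.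

Definition in_Vbeta (rl : rule) (x : nat) : Prop :=
  (In x (vars (lhs rl)) /\
   ~ (In x (vars (rhs rl)) \/
      exists j, j < ncond rl /\ (In x (vars (cs rl j)) \/ In x (vars (ct rl j)))))
  \/
  (exists i, i < ncond rl /\ In x (vars (ct rl i)) /\
   ~ (In x (vars (rhs rl)) \/
      exists j, i < j /\ j < ncond rl /\ In x (vars (cs rl j)))).

Inductive trace_term : Type :=
| TT : nat -> pos -> subst_t -> list (list trace_term) -> trace_term.

Definition trace := list trace_term.

Inductive safe_tt (R : list rule) : trace_term -> Prop :=
| safe_TT : forall b p sigma pis rl,
    In rl R -> label rl = b -> length pis = ncond rl ->
    ground_subst sigma ->
    (forall x, in_dom sigma x <-> in_Vbeta rl x) ->
    (forall pi, In pi pis -> forall tt, In tt pi -> safe_tt R tt) ->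
    safe_tt R (TT b p sigma pis).

Definition safe_trace (R : list rule) (pi : trace) : Prop :=
  forall tt, In tt pi -> safe_tt R tt.

Definition safe_pair (R : list rule) (s : term) (pi : trace) : Prop :=
  ground s /\ safe_trace R pi.

(** Backward reversible rewriting, with derivations as (proof-relevant) objects.
    [bstep R t pi' s pi] :  <t, pi'>  <-  <s, pi>   (one backward step)
    [bstar R t pi' s pi] :  <t, pi'>  <-* <s, pi>                          *)
Inductive bstep (R : list rule) : term -> trace -> term -> trace -> Type :=
| BStep : forall (t s : term) (b : nat) (p : pos) (sigma' : subst_t)
                 (pis : list trace) (pi : trace) (rl : rule) (theta : subst_t),
    safe_pair R t (TT b p sigma' pis :: pi) ->
    In rl R -> label rl = b -> length pis = ncond rl ->
    ground_subst theta ->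
    (forall x, in_dom theta x <->
       ((In x (vars (rhs rl)) \/
         exists j, j < ncond rl /\ In x (vars (cs rl j))) /\ ~ in_dom sigma' x)) ->
    subterm_at t p = Some (subst theta (rhs rl)) ->
    (forall i, i < ncond rl ->
       bstar R (subst sigma' (subst theta (ct rl i))) (nth i pis [])
               (subst sigma' (subst theta (cs rl i))) []) ->
    replace_at t p (subst sigma' (subst theta (lhs rl))) = Some s ->
    bstep R t (TT b p sigma' pis :: pi) s pi
with bstar (R : list rule) : term -> trace -> term -> trace -> Type :=
| BRefl : forall t pi, bstar R t pi t pi
| BTrans : forall t1 pi1 t2 pi2 t3 pi3,
    bstep R t1 pi1 t2 pi2 -> bstar R t2 pi2 t3 pi3 -> bstar R t1 pi1 t3 pi3.

Fixpoint det_step {R : list rule} {t pi' s pi} (D : bstep R t pi' s pi) {struct D} : Prop :=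
  match D with
  | @BStep _ t0 s0 b p sigma' pis pi0 rl theta _ _ _ _ _ _ _ subs _ =>
      (forall s'' pi'', bstep R t0 (TT b p sigma' pis :: pi0) s'' pi'' ->
                        (s'', pi'') = (s0, pi0)) /\
      (forall i (H : i < ncond rl), det_star (subs i H))
  end
with det_star {R : list rule} {t pi' s pi} (D : bstar R t pi' s pi) {struct D} : Prop :=
  match D with
  | @BRefl _ _ _ => True
  | @BTrans _ _ _ _ _ _ _ st rest => det_step st /\ det_star rest
  end.

(** Backward steps are functional.  The head trace term β(p, σ', π_1, ..., π_n)
    fixes the rule (labels are unique) and the position; matching r at p fixes
    θ on Var(r).  A variable of t_i outside Var(r) and the later s_j lies in
    V_β, which by safety is exactly Dom(σ'), where θ must be the identity.  So going through the conditions from the last to the first,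
    the instance of t_i is already determined, and by induction on the
    subderivation π_i so is the instance of s_i; hence θσ' is determined on
    all variables and so is the result t[lθσ']_p.  A derivation all of whose
    steps are functional is deterministic. *)

From Stdlib Require Import List Lia Classical Wf_nat.

Lemma term_nested_ind (P : term -> Prop) :
  (forall x, P (Var x)) ->
  (forall f args, Forall P args -> P (Fun f args)) ->
  forall t, P t.
Proof.
  intros HVar HFun. fix IH 1. intros [x | f args].
  - apply HVar.
  - apply HFun. induction args as [|a args IHargs]; constructor; [apply IH | exact IHargs].
Qed.

Lemma subst_subst sigma theta u :
  subst sigma (subst theta u) = subst (fun x => subst sigma (theta x)) u.
Proof.
  induction u using term_nested_ind; simpl; auto.
  f_equal. rewrite map_map. induction H; simpl; auto. now rewrite H, IHForall.
Qed.

Lemma eq_in_subst sigma theta u :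
  (forall x, In x (vars u) -> sigma x = theta x) -> subst sigma u = subst theta u.
Proof.
  induction u using term_nested_ind; simpl; intros Heq.
  - apply Heq; auto.
  - f_equal. induction H; simpl in *; auto.
    rewrite H, IHForall; auto; intros; apply Heq, in_or_app; auto.
Qed.

Lemma subst_eq_vars sigma theta u :
  subst sigma u = subst theta u -> forall x, In x (vars u) -> sigma x = theta x.
Proof.
  induction u using term_nested_ind; simpl; intros Heq y Hy.
  - now destruct Hy as [<- | []].
  - injection Heq as Heq. induction H; simpl in *; [contradiction |].
    injection Heq as Heq1 Heq2. apply in_app_or in Hy as [Hy | Hy]; eauto.
Qed.

Lemma not_in_dom sigma x : ~ in_dom sigma x -> sigma x = Var x.
Proof. intros H. now apply NNPP. Qed.

Lemma NoDup_map_label_inj {R rl1 rl2} :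
  NoDup (map label R) -> In rl1 R -> In rl2 R -> label rl1 = label rl2 -> rl1 = rl2.
Proof.
  induction R as [|rl R IH]; simpl; intros HR H1 H2 Hl; [contradiction |].
  inversion HR as [|? ? Hnotin HR']; subst.
  destruct H1 as [<- | H1], H2 as [<- | H2]; auto;
    exfalso; apply Hnotin; [rewrite Hl | rewrite <- Hl]; now apply in_map.
Qed.

(** The variables bound by the match θ of a backward step: Var(r, s_1, ..., s_n). *)
Definition matched_var (rl : rule) (x : nat) : Prop :=
  In x (vars (rhs rl)) \/ exists j, j < ncond rl /\ In x (vars (cs rl j)).

Section MatchUniqueness.

Variables (rl : rule) (sigma theta1 theta2 : subst_t).

Hypothesis dom_sigma : forall x, in_dom sigma x <-> in_Vbeta rl x.
Hypothesis dom_theta1 : forall x, in_dom theta1 x <-> (matched_var rl x /\ ~ in_dom sigma x).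
Hypothesis dom_theta2 : forall x, in_dom theta2 x <-> (matched_var rl x /\ ~ in_dom sigma x).
Hypothesis rhs_match : subst theta1 (rhs rl) = subst theta2 (rhs rl).

Let agree x := subst sigma (theta1 x) = subst sigma (theta2 x).

Hypothesis cond_agree : forall j, j < ncond rl ->
  (forall x, In x (vars (ct rl j)) -> agree x) ->
  forall x, In x (vars (cs rl j)) -> agree x.

Lemma agree_outside_match x : ~ (matched_var rl x /\ ~ in_dom sigma x) -> agree x.
Proof.
  intros Hx. unfold agree.
  rewrite (not_in_dom theta1 x), (not_in_dom theta2 x); auto;
    [rewrite dom_theta2 | rewrite dom_theta1]; exact Hx.
Qed.

Lemma agree_rhs x : In x (vars (rhs rl)) -> agree x.
Proof. intros Hx. unfold agree. f_equal. exact (subst_eq_vars _ _ _ rhs_match x Hx). Qed.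

Lemma agree_cs j : j < ncond rl -> forall x, In x (vars (cs rl j)) -> agree x.
Proof.
  remember (ncond rl - j) as m eqn:Hm. revert j Hm.
  induction m as [m IH] using (well_founded_induction lt_wf); intros j Hm Hj.
  apply cond_agree; auto. intros x Hx.
  destruct (classic (In x (vars (rhs rl)))) as [Hr | Hr]; [now apply agree_rhs |].
  destruct (classic (exists k, j < k /\ k < ncond rl /\ In x (vars (cs rl k))))
    as [(k & Hjk & Hk & Hxk) | Hlater].
  - apply (IH (ncond rl - k)) with k; auto; lia.
  - apply agree_outside_match. intros [_ Hnot]. apply Hnot, dom_sigma.
    right. exists j. repeat split; auto. intros [? | ?]; auto.
Qed.

Lemma composed_matches_eq u :
  subst sigma (subst theta1 u) = subst sigma (subst theta2 u).
Proof.
  rewrite !subst_subst. apply eq_in_subst. intros x _.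
  destruct (classic (matched_var rl x)) as [[Hx | (j & Hj & Hx)] | Hx].
  - now apply agree_rhs.
  - now apply (agree_cs j).
  - apply agree_outside_match. tauto.
Qed.

End MatchUniqueness.

Lemma bstep_trace {R t pi' s pi} : bstep R t pi' s pi -> exists tt, pi' = tt :: pi.
Proof. intros D. destruct D. eauto. Qed.

Lemma bstar_trace_length R t pi' s pi : bstar R t pi' s pi -> length pi <= length pi'.
Proof.
  intros D. induction D as [|? ? ? ? ? ? st]; auto.
  destruct (bstep_trace st) as [tt ->]. simpl. lia.
Qed.

Scheme bstep_mut := Induction for bstep Sort Prop
  with bstar_mut := Induction for bstar Sort Prop.
Combined Scheme bstep_bstar_mut from bstep_mut, bstar_mut.

Section Functionality.

Variable R : list rule.
Hypothesis labels_unique : NoDup (map label R).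

Lemma safe_pair_head_dom {t b p sigma pis pi rl} :
  safe_pair R t (TT b p sigma pis :: pi) -> In rl R -> label rl = b ->
  forall x, in_dom sigma x <-> in_Vbeta rl x.
Proof.
  intros [_ Hsafe] Hrl Hl. pose proof (Hsafe _ (or_introl eq_refl)) as Hhead.
  inversion Hhead as [? ? ? ? rl' Hrl' Hl' _ _ Hdom' _]; subst.
  now rewrite (NoDup_map_label_inj labels_unique Hrl' Hrl Hl') in Hdom'.
Qed.

Lemma bstep_bstar_functional :
  (forall t pi' s pi (D : bstep R t pi' s pi) s2 pi2,
      bstep R t pi' s2 pi2 -> s2 = s /\ pi2 = pi) /\
  (forall t pi' s pi (D : bstar R t pi' s pi) s2,
      bstar R t pi' s2 pi -> s2 = s).
Proof.
  apply (bstep_bstar_mut R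
    (fun t pi' s pi _ => forall s2 pi2, bstep R t pi' s2 pi2 -> s2 = s /\ pi2 = pi)
    (fun t pi' s pi _ => forall s2, bstar R t pi' s2 pi -> s2 = s)).
  - intros t s b p sigma pis pi rl theta1 Hsafe Hrl Hl _ _ Hdom1 Hsub subs IHsubs Hrep
      s2 pi2 D2.
    inversion D2 as [? ? ? ? ? ? ? rl2 theta2 _ Hrl2 Hl2 _ _ Hdom2 Hsub2 subs2 Hrep2];
      subst.
    assert (rl2 = rl) as -> by (apply (NoDup_map_label_inj labels_unique); auto).
    pose proof (safe_pair_head_dom Hsafe Hrl eq_refl) as Hsigma.
    assert (Hlhs : subst sigma (subst theta2 (lhs rl)) = subst sigma (subst theta1 (lhs rl))).
    { apply (composed_matches_eq rl sigma theta2 theta1); auto.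
      - rewrite Hsub in Hsub2. now injection Hsub2.
      - intros j Hj Hct.
        apply (subst_eq_vars (fun x => subst sigma (theta2 x)) (fun x => subst sigma (theta1 x))).
        rewrite <- !subst_subst. apply (IHsubs j Hj).
        rewrite !subst_subst, <- (eq_in_subst _ _ (ct rl j) Hct), <- !subst_subst.
        exact (subs2 j Hj). }
    rewrite Hlhs, Hrep in Hrep2. now injection Hrep2.
  - intros t pi s2 D2. inversion D2 as [| ? ? ? ? ? ? st rest]; subst; auto.
    apply bstar_trace_length in rest. destruct (bstep_trace st) as [tt ->].
    simpl in rest. lia.
  - intros t1 pi1 t2 pi2 t3 pi3 st IHst rest IHrest s2 D2.
    inversion D2 as [| ? ? ? ? ? ? st2 rest2]; subst.
    + exfalso. apply bstar_trace_length in rest. destruct (bstep_trace st) as [tt ->].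
      simpl in rest. lia.
    + destruct (IHst _ _ st2) as [-> ->]. exact (IHrest _ rest2).
Qed.

Lemma det_step_star_all :
  (forall t pi' s pi (D : bstep R t pi' s pi), det_step D) /\
  (forall t pi' s pi (D : bstar R t pi' s pi), det_star D).
Proof.
  apply (bstep_bstar_mut R (fun _ _ _ _ D => det_step D) (fun _ _ _ _ D => det_star D));
    simpl; auto.
  intros t s b p sigma pis pi rl theta Hsafe Hrl Hl Hlen Hground Hdom Hsub subs IHsubs Hrep.
  split; auto. intros s2 pi2 D2.
  destruct (proj1 bstep_bstar_functional _ _ _ _
    (@BStep R t s b p sigma pis pi rl theta Hsafe Hrl Hl Hlen Hground Hdom Hsub subs Hrep)
    _ _ D2) as [-> ->].
  reflexivity.
Qed.

End Functionality.

Theorem mainTheorem11 :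
  forall (R : list rule), DCTRS R ->
  forall (t : term) (pi' : trace) (s : term) (pi : trace)
         (D : bstar R t pi' s pi),
    safe_pair R t pi' -> det_star D.
Proof.
  intros R [labels_unique _] t pi' s pi D _.
  exact (proj2 (det_step_star_all R labels_unique) _ _ _ _ D).
Qed.
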